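(* Every graph $G$ with circular chromatic number $\chi_c(G)\le 5/2$ belongs to CBU.
   Context: Let $e_1,\ldots,e_d$ be the standard basis of $\mathbb{R}^d$. For $d\ge 1$, a graph belongs to $d$-CBU if one can assign to each vertex an axis-parallel box (product of $d$ closed intervals of positive length) in $\mathbb{R}^d$ such that the boxes have pairwise disjoint interiors, two distinct vertices are adjacent iff their boxes intersect, and any two intersecting boxes intersect in a $(d-1)$-dimensional box orthogonal to $e_1$. CBU is the union of $d$-CBU over all $d\ge 1$. *)

From mathcomp Require Import all_boot.
From Stdlib Require Import Reals.

Set Implicit Arguments.
Unset Strict Implicit.
Unset Printing Implicit Defensive.

Definition simple_graph (V : finType) (adj : rel V) : Prop :=
  (forall u v, adj u v = adj v u) /\ (forall v, adj v v = false).

(* (k,d)-coloring: c : V -> {0,...,k-1} with d <= |c u - c v| <= k - d on edges.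
   |a - b| on nat is written (a - b) + (b - a) (truncated subtraction). *)
Definition kd_coloring (V : finType) (adj : rel V) (k d : nat) (c : V -> 'I_k) : Prop :=
  forall u v, adj u v ->
    (d <= (c u - c v) + (c v - c u) <= k - d)%N.

Definition kd_colorable (V : finType) (adj : rel V) (k d : nat) : Prop :=
  (0 < d)%N /\ (2 * d <= k)%N /\ exists c : V -> 'I_k, @kd_coloring V adj k d c.

(* chi_c(G) = inf { k/d | G has a (k,d)-coloring, k >= 2d, d >= 1 }.
   "chi_c(G) <= r" unfolds the infimum: for every eps > 0 some element of the
   set is < r + eps. *)
Definition circ_chrom_le (V : finType) (adj : rel V) (r : R) : Prop :=
  forall eps : R, (0 < eps)%R ->
    exists k d : nat, kd_colorable adj k d /\ (INR k / INR d < r + eps)%R.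

Definition in_box (d : nat) (lo hi : 'I_d -> R) (x : 'I_d -> R) : Prop :=
  forall i, (lo i <= x i <= hi i)%R.

Definition in_int_box (d : nat) (lo hi : 'I_d -> R) (x : 'I_d -> R) : Prop :=
  forall i, (lo i < x i < hi i)%R.

(* coordinate e_1 is index 0 *)
Definition flat_box_e1 (d : nat) (S : ('I_d -> R) -> Prop) : Prop :=
  exists (c : R) (a b : 'I_d -> R),
    (forall i : 'I_d, nat_of_ord i <> 0%N -> (a i < b i)%R) /\
    (forall x : 'I_d -> R,
       S x <-> (forall i : 'I_d,
                  (nat_of_ord i = 0%N -> x i = c) /\
                  (nat_of_ord i <> 0%N -> (a i <= x i <= b i)%R))).

Definition in_dCBU (V : finType) (adj : rel V) (d : nat) : Prop :=
  (1 <= d)%N /\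
  exists lo hi : V -> 'I_d -> R,
    (forall v i, (lo v i < hi v i)%R) /\
    (forall u v, u <> v ->
       ~ (exists x, in_int_box (lo u) (hi u) x /\ in_int_box (lo v) (hi v) x)) /\
    (forall u v, u <> v ->
       (adj u v <-> exists x, in_box (lo u) (hi u) x /\ in_box (lo v) (hi v) x)) /\
    (forall u v, u <> v ->
       (exists x, in_box (lo u) (hi u) x /\ in_box (lo v) (hi v) x) ->
       flat_box_e1 (fun x => in_box (lo u) (hi u) x /\ in_box (lo v) (hi v) x)).

Definition in_CBU (V : finType) (adj : rel V) : Prop :=
  exists d : nat, in_dCBU adj d.

From Stdlib Require Import ZArith Zwf Lia Classical Reals Lra.
From mathcomp Require Import all_boot zify.

Set Implicit Arguments.
Unset Strict Implicit.
Unset Printing Implicit Defensive.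

(* A finite graph with chi_c <= 5/2 is (5,2)-colourable. Take a (k,d)-colouring
   with k/d < 5/2 + 1/(2(|V|+1)) and orient every edge from the smaller to the
   larger colour. A closed walk of length L with U ascents satisfies d L <= k U,
   and for L <= |V| this rounds to 2 L <= 5 U; hence the difference constraints
   x_v - x_u <= 3 along ascents and <= -2 along descents have no negative cycle,
   and a shortest-walk potential x satisfies them. Then 2 <= |x_u - x_v| <= 3 on
   every edge, so x mod 5 is a (5,2)-colouring, i.e. a homomorphism to C5.
   The colours of C5 have a contact representation by intervals of a line; use it
   as the first coordinate, and add one coordinate per vertex w in which w gets
   [0,1], its neighbours [0,3] and its other non-neighbours [2,3]. Non-adjacent
   boxes are then disjoint, and adjacent boxes meet in a facet orthogonal to e_1. *)

Lemma Z_least_element (P : Z -> Prop) (b : Z) :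
  (forall m, P m -> (b <= m)%Z) -> (exists m, P m) ->
  exists m, P m /\ forall m', P m' -> (m <= m')%Z.
Proof.
move=> P_ge [m Pm]; elim/(well_founded_ind (Zwf_well_founded b)): m Pm => m IH Pm.
case: (classic (exists m', P m' /\ (m' < m)%Z)) => [[m' [Pm' lt_m'm]] | none].
  by apply: (IH m') => //; split; [exact: P_ge | lia].
exists m; split=> // m' Pm'; case: (Z.lt_ge_cases m' m) => // lt_m'm.
by case: none; exists m'.
Qed.

Lemma seq_lower_bound (T : eqType) (f : T -> Z) (s : seq T) :
  exists b, forall x, x \in s -> (b <= f x)%Z.
Proof.
elim: s => [|y s [b ge_b]]; first by exists 0%Z.
exists (Z.min (f y) b) => x; rewrite inE => /orP[/eqP -> | /ge_b]; lia.
Qed.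

Local Open Scope Z_scope.

Section WalkWeight.

Variables (V : finType) (adj : rel V).

Fixpoint weight (f : V -> V -> Z) (u : V) (p : seq V) : Z :=
  if p is v :: p' then f u v + weight f v p' else 0.

Lemma weight_cat f u p q : weight f u (p ++ q) = weight f u p + weight f (last u p) q.
Proof. by elim: p u => [|v p IH] u /=; rewrite ?IH; lia. Qed.

Lemma weight_rcons f u p v : weight f u (rcons p v) = weight f u p + f (last u p) v.
Proof. by rewrite -cats1 weight_cat /=; lia. Qed.

Lemma weight_affine f (k m : Z) u p :
  weight (fun x y => k * f x y - m) u p = k * weight f u p - m * Z.of_nat (size p).
Proof. by elim: p u => [|v p IH] u /=; rewrite ?IH; lia. Qed.

Lemma weight_ge f b u p : (forall x y, b <= f x y) -> b * Z.of_nat (size p) <= weight f u p.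
Proof.
move=> f_ge; elim: p u => [|v p IH] u /=; first lia.
by have := f_ge u v; have := IH v; lia.
Qed.

Lemma potential_le_weight (x : V -> Z) f u p :
  (forall y z, adj y z -> x z - x y <= f y z) -> path adj u p ->
  x (last u p) - x u <= weight f u p.
Proof.
move=> x_le; elim: p u => [|v p IH] u /=; first lia.
by case/andP=> /x_le uv /IH; lia.
Qed.

End WalkWeight.

Section Potential.

Variables (V : finType) (adj : rel V) (w : V -> V -> Z).

Hypothesis cycle_weight_ge0 : forall u p,
  path adj u p -> last u p = u -> (size p <= #|V|)%N -> 0 <= weight w u p.

Lemma shorten_walk u p :
  path adj u p -> (size p <= #|V|)%N -> ~~ uniq (u :: p) ->
  exists p', [/\ path adj u p', last u p' = last u p, (size p' < size p)%N
               & weight w u p' <= weight w u p].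
Proof.
elim: p u => [|v p IH] u // walk size_p.
rewrite [uniq _]/= negb_and negbK => /orP[u_in | not_uniq].
  case/splitPr: u_in walk size_p => p1 p2.
  rewrite -cat_rcons cat_path last_rcons size_cat size_rcons => /andP[cycle walk2] size_p.
  have := cycle_weight_ge0 cycle (last_rcons _ _ _) (leq_trans _ size_p).
  rewrite size_rcons leq_addr => /(_ isT) ge0.
  exists p2; split=> //.
  - by rewrite last_cat last_rcons.
  - by rewrite addSn ltnS leq_addl.
  - by rewrite weight_cat last_rcons; lia.
case/andP: walk => uv vp.
have [p' [vp' last_p' size_p' weight_p']] := IH v vp (ltnW size_p) not_uniq.
by exists (v :: p'); split=> //=; [rewrite uv | lia].
Qed.

Lemma min_weight_short_walk v : exists m,
  (exists u p, [/\ path adj u p, last u p = v, (size p < #|V|)%N & weight w u p = m]) /\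
  forall u p, path adj u p -> last u p = v -> (size p < #|V|)%N -> m <= weight w u p.
Proof.
pose P m := exists u p,
  [/\ path adj u p, last u p = v, (size p < #|V|)%N & weight w u p = m].
have [b b_le] := seq_lower_bound (fun e : V * V => w e.1 e.2) (enum {: V * V}).
have P_ge m : P m -> - Z.abs b * Z.of_nat #|V| <= m.
  case=> u [p [_ _ size_p <-]].
  have := @weight_ge V w b u p (fun x y => b_le (x, y) (mem_enum _ _)); nia.
have P_v : P 0 by exists v, [::]; split=> //; apply/card_gt0P; exists v.
have [m [Pm m_min]] := Z_least_element P_ge (ex_intro _ _ P_v).
by exists m; split=> // u p walk last_p size_p; apply: m_min; exists u, p.
Qed.

Lemma potential_of_nonneg_cycles :
  exists x : V -> Z, forall u v, adj u v -> x v - x u <= w u v.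
Proof.
have /fin_all_exists[x x_min] := min_weight_short_walk.
exists x => u v uv.
have [[u0 [p [walk last_p size_p <-]]] _] := x_min u.
have [_ x_le] := x_min v.
have walk' : path adj u0 (rcons p v) by rewrite rcons_path walk last_p.
have weight' : weight w u0 (rcons p v) = weight w u0 p + w u v by rewrite weight_rcons last_p.
suff : x v <= weight w u0 (rcons p v) by rewrite weight'; lia.
have [short | long] := ltnP (size (rcons p v)) #|V|.
  by apply: x_le; rewrite ?last_rcons.
have not_uniq : ~~ uniq (u0 :: rcons p v).
  apply/negP => /card_uniqP card_walk.
  by have := max_card (mem (u0 :: rcons p v)); rewrite card_walk /= ltnNge long.
have size_walk : (size (rcons p v) <= #|V|)%N by rewrite size_rcons.
have [p' [walk'' last_p' size_p' weight_p']] := shorten_walk walk' size_walk not_uniq.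
have := x_le u0 p' walk''; rewrite last_p' last_rcons => /(_ erefl).
by move/(_ (leq_trans size_p' size_walk)); lia.
Qed.

End Potential.

Lemma ascent_ratio_rounding (k d N L : nat) (U : Z) :
  (0 < k)%N -> (2 * k * N < 5 * d * N + d)%N -> (L <= N)%N ->
  Z.of_nat d * Z.of_nat L <= Z.of_nat k * U -> 2 * Z.of_nat L <= 5 * U.
Proof. nia. Qed.

Section CircularColoring.

Variables (V : finType) (adj : rel V) (k d : nat) (c : V -> 'I_k).
Hypotheses (d_gt0 : (0 < d)%N) (c_col : kd_coloring adj d c).

Definition ascent (u v : V) : Z := if (c u < c v)%N then 1 else 0.

Lemma kd_coloring_cycle_ascents u p : path adj u p -> last u p = u ->
  Z.of_nat d * Z.of_nat (size p) <= Z.of_nat k * weight ascent u p.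
Proof.
move=> walk closed.
have arc y z : adj y z ->
    Z.of_nat (c z) - Z.of_nat (c y) <= Z.of_nat k * ascent y z - Z.of_nat d.
  by move/c_col; rewrite /ascent; case: ltnP; lia.
have := potential_le_weight arc walk; rewrite weight_affine closed; lia.
Qed.

Lemma kd_coloring_potential :
  (forall u v, adj u v = adj v u) -> (2 * k * #|V|.+1 < 5 * d * #|V|.+1 + d)%N ->
  exists x : V -> Z, forall u v, adj u v -> 2 <= Z.abs (x u - x v) <= 3.
Proof.
move=> adjC ratio.
have cycle_ge0 u p : path adj u p -> last u p = u -> (size p <= #|V|)%N ->
    0 <= weight (fun x y => 5 * ascent x y - 2) u p.
  move=> walk closed size_p; rewrite weight_affine.
  have k_gt0 : (0 < k)%N by apply: leq_ltn_trans (ltn_ord (c u)).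
  have ascents := kd_coloring_cycle_ascents walk closed.
  have := ascent_ratio_rounding k_gt0 ratio (leqW size_p) ascents; lia.
have [x x_le] := potential_of_nonneg_cycles cycle_ge0.
exists x => u v uv; have := x_le u v uv; have := x_le v u; rewrite adjC => /(_ uv).
by have := c_col uv; rewrite /ascent; case: ltngtP; lia.
Qed.

End CircularColoring.

Lemma kd_coloring_5_2_of_potential (V : finType) (adj : rel V) (x : V -> Z) :
  (forall u v, adj u v -> 2 <= Z.abs (x u - x v) <= 3) ->
  @kd_coloring V adj 5 2 (fun v => inord (Z.to_nat (x v mod 5))).
Proof.
move=> x_adj u v /x_adj x_uv.
have mod_uv : 2 <= Z.abs (x u mod 5 - x v mod 5) <= 3 by Z.div_mod_to_equations; lia.
have u_bound := Z.mod_pos_bound (x u) 5 erefl.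
have v_bound := Z.mod_pos_bound (x v) 5 erefl.
by rewrite /= !inordK; lia.
Qed.

Local Close Scope Z_scope.
Local Open Scope R_scope.

Lemma circ_chrom_le_ratio (V : finType) (adj : rel V) (r : R) (N : nat) :
  (0 < N)%N -> circ_chrom_le adj r ->
  exists k d, kd_colorable adj k d /\ INR k * (2 * INR N) < INR d * (2 * r * INR N + 1).
Proof.
move=> N_gt0 chi.
have N_pos : 0 < INR N by apply: lt_0_INR; apply/ltP.
have [|k [d [col lt_kd]]] := chi (/ (2 * INR N)); first by apply: Rinv_0_lt_compat; lra.
exists k, d; split=> //.
have d_pos : 0 < INR d by case: col => d_gt0 _; apply: lt_0_INR; apply/ltP.
have := Rmult_lt_compat_r (INR d * (2 * INR N)) _ _ _ lt_kd.
have -> : INR k / INR d * (INR d * (2 * INR N)) = INR k * (2 * INR N) by field; lra.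
have -> : (r + / (2 * INR N)) * (INR d * (2 * INR N)) = INR d * (2 * r * INR N + 1).
  by field; lra.
by apply; apply: Rmult_lt_0_compat; lra.
Qed.

Lemma circ_chrom_le_5_2_ratio (V : finType) (adj : rel V) :
  circ_chrom_le adj (5 / 2) ->
  exists k d, kd_colorable adj k d /\ (2 * k * #|V|.+1 < 5 * d * #|V|.+1 + d)%N.
Proof.
case/(circ_chrom_le_ratio (N := #|V|.+1) isT) => k [d [col lt_kd]]; exists k, d; split=> //.
apply/ltP/INR_lt; rewrite plus_INR !mult_INR.
have -> : INR 5 = 5 by rewrite INR_IZR_INZ.
have -> : INR 2 = 2 by rewrite INR_IZR_INZ.
nra.
Qed.

Lemma circ_chrom_le_5_2_colorable (V : finType) (adj : rel V) :
  (forall u v, adj u v = adj v u) -> circ_chrom_le adj (5 / 2) ->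
  exists c : V -> 'I_5, kd_coloring adj 2 c.
Proof.
move=> adjC /circ_chrom_le_5_2_ratio [k [d [[d_gt0 [_ [c c_col]]] ratio]]].
have [x x_adj] := kd_coloring_potential d_gt0 c_col adjC ratio.
by eexists; apply: kd_coloring_5_2_of_potential x_adj.
Qed.

Section Boxes.

Variable d : nat.

Lemma in_box_meet (lo1 hi1 lo2 hi2 x : 'I_d -> R) :
  in_box lo1 hi1 x /\ in_box lo2 hi2 x <->
  in_box (fun i => Rmax (lo1 i) (lo2 i)) (fun i => Rmin (hi1 i) (hi2 i)) x.
Proof.
split=> [[x1 x2] i | x12].
  by have := x1 i; have := x2 i; split; [apply: Rmax_lub | apply: Rmin_glb]; lra.
split=> i; have := x12 i; have := Rmax_l (lo1 i) (lo2 i); have := Rmax_r (lo1 i) (lo2 i);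
  have := Rmin_l (hi1 i) (hi2 i); have := Rmin_r (hi1 i) (hi2 i); lra.
Qed.

Lemma in_box_of_le (lo hi : 'I_d -> R) : (forall i, lo i <= hi i) -> exists x, in_box lo hi x.
Proof.
by move=> le_lohi; exists (fun i => (lo i + hi i) / 2) => i; have := le_lohi i; lra.
Qed.

Lemma in_int_box_meet_lt (lo1 hi1 lo2 hi2 x : 'I_d -> R) :
  in_int_box lo1 hi1 x -> in_int_box lo2 hi2 x ->
  forall i, Rmax (lo1 i) (lo2 i) < Rmin (hi1 i) (hi2 i).
Proof.
move=> x1 x2 i; have [lo1_x x_hi1] := x1 i; have [lo2_x x_hi2] := x2 i.
by apply: (Rlt_trans _ (x i)); [apply: Rmax_lub_lt | apply: Rmin_glb_lt]; lra.
Qed.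

Lemma flat_box_e1_ext (S S' : ('I_d -> R) -> Prop) :
  (forall x, S x <-> S' x) -> flat_box_e1 S' -> flat_box_e1 S.
Proof.
move=> SS' [c [a [b [lt_ab S'E]]]]; exists c, a, b; split=> // x.
by rewrite -S'E; apply: SS'.
Qed.

End Boxes.

Lemma flat_box_e1_box (d : nat) (lo hi : 'I_d.+1 -> R) :
  lo ord0 = hi ord0 -> (forall i, i != ord0 -> lo i < hi i) -> flat_box_e1 (in_box lo hi).
Proof.
have ord0P (i : 'I_d.+1) : nat_of_ord i = 0%N <-> i = ord0.
  by split=> [i0 | ->]; first exact: ord_inj.
move=> eq0 lt_i; exists (lo ord0), lo, hi; split.
  by move=> i i_neq0; apply: lt_i; apply/eqP; rewrite -ord0P.
move=> x; split=> [x_in i | x_in i].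
  by split=> [/ord0P -> | _]; [have := x_in ord0; lra | exact: x_in].
case: (eqVneq i ord0) => [-> | i_neq0]; first by rewrite (proj1 (x_in ord0) erefl); lra.
by apply: (proj2 (x_in i)); rewrite ord0P; apply/eqP.
Qed.

Lemma in_dCBU_of_boxes (V : finType) (adj : rel V) (d : nat) (lo hi : V -> 'I_d.+1 -> R) :
  (forall v i, lo v i < hi v i) ->
  (forall u v, u <> v -> adj u v ->
     Rmax (lo u ord0) (lo v ord0) = Rmin (hi u ord0) (hi v ord0) /\
     forall i, i != ord0 -> Rmax (lo u i) (lo v i) < Rmin (hi u i) (hi v i)) ->
  (forall u v, u <> v -> ~~ adj u v ->
     exists i, Rmin (hi u i) (hi v i) < Rmax (lo u i) (lo v i)) ->
  in_dCBU adj d.+1.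
Proof.
move=> lt_lohi touch separate.
have meet_adj u v : u <> v ->
    (exists x, in_box (lo u) (hi u) x /\ in_box (lo v) (hi v) x) -> adj u v.
  move=> uv [x /in_box_meet x_in]; apply/negPn/negP => /(separate u v uv) [i].
  by have := x_in i; lra.
split=> //; exists lo, hi; split=> //; split; [|split].
- move=> u v uv [x [x_u x_v]]; have lt_meet := in_int_box_meet_lt x_u x_v.
  have [adj_uv | /(separate u v uv) [i]] := boolP (adj u v); last by have := lt_meet i; lra.
  by have [eq0 _] := touch u v uv adj_uv; have := lt_meet ord0; lra.
- move=> u v uv; split=> [adj_uv | /(meet_adj u v uv) //].
  have [eq0 lt_i] := touch u v uv adj_uv.
  have [|x x_in] := in_box_of_le (lo := fun i => Rmax (lo u i) (lo v i))
                                 (hi := fun i => Rmin (hi u i) (hi v i)).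
    by move=> i; case: (eqVneq i ord0) => [-> | /lt_i]; lra.
  by exists x; apply/in_box_meet.
- move=> u v uv /(meet_adj u v uv) /(touch u v uv) [eq0 lt_i].
  exact: flat_box_e1_ext (in_box_meet _ _ _ _) (flat_box_e1_box eq0 lt_i).
Qed.

Lemma Rmax_lt_Rmin x y z t : x < z -> x < t -> y < z -> y < t -> Rmax x y < Rmin z t.
Proof. by move=> *; apply: Rmax_lub_lt; apply: Rmin_glb_lt. Qed.

Lemma touching_intervals_meet a1 b1 a2 b2 :
  a1 < b1 -> a2 < b2 -> b1 = a2 \/ b2 = a1 -> Rmax a1 a2 = Rmin b1 b2.
Proof.
move=> lt1 lt2 [b1a2 | b2a1].
  by rewrite Rmax_right ?Rmin_left; lra.
by rewrite Rmax_left ?Rmin_right; lra.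
Qed.

Section ContactBoxes.

Variables (V : finType) (adj : rel V) (a b : V -> R).
Hypotheses (adjC : forall u v, adj u v = adj v u) (lt_ab : forall v, a v < b v).
Hypothesis touch : forall u v, adj u v -> b u = a v \/ b v = a u.

Definition side_lo (w v : V) : R := if (v == w) || adj w v then 0 else 2.
Definition side_hi (w v : V) : R := if v == w then 1 else 3.

Definition contact_lo (v : V) (i : 'I_#|V|.+1) : R :=
  if unlift ord0 i is Some j then side_lo (enum_val j) v else a v.
Definition contact_hi (v : V) (i : 'I_#|V|.+1) : R :=
  if unlift ord0 i is Some j then side_hi (enum_val j) v else b v.

Lemma side_lt w v : side_lo w v < side_hi w v.
Proof. by rewrite /side_lo /side_hi; case: (v == w) => /=; [|case: adj]; lra. Qed.

Lemma side_overlap w u v : u != v -> adj u v ->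
  Rmax (side_lo w u) (side_lo w v) < Rmin (side_hi w u) (side_hi w v).
Proof.
move=> uv adj_uv; rewrite /side_lo /side_hi.
have [<- | uw] := eqVneq u w.
  by rewrite eq_sym (negbTE uv) adj_uv; apply: Rmax_lt_Rmin; lra.
have [<- | vw] := eqVneq v w.
  by rewrite adjC adj_uv; apply: Rmax_lt_Rmin; lra.
by apply: Rmax_lt_Rmin; case: ifP; lra.
Qed.

Lemma side_separate u v : u != v -> ~~ adj u v ->
  Rmin (side_hi u u) (side_hi u v) < Rmax (side_lo u u) (side_lo u v).
Proof.
move=> uv /negbTE nadj_uv; rewrite /side_lo /side_hi eqxx eq_sym (negbTE uv) nadj_uv /=.
by rewrite Rmin_left ?Rmax_right; lra.
Qed.

Lemma contact_lt v i : contact_lo v i < contact_hi v i.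
Proof.
rewrite /contact_lo /contact_hi.
by case: unliftP => [j _ | _]; [apply: side_lt | apply: lt_ab].
Qed.

Lemma contact_touch u v : u != v -> adj u v ->
  Rmax (contact_lo u ord0) (contact_lo v ord0) =
    Rmin (contact_hi u ord0) (contact_hi v ord0) /\
  forall i, i != ord0 ->
    Rmax (contact_lo u i) (contact_lo v i) < Rmin (contact_hi u i) (contact_hi v i).
Proof.
move=> uv adj_uv; split.
  rewrite /contact_lo /contact_hi unlift_none.
  exact: touching_intervals_meet (lt_ab u) (lt_ab v) (touch adj_uv).
move=> i; rewrite /contact_lo /contact_hi.
case: unliftP => [j _ _ | ->]; last by rewrite eqxx.
exact: side_overlap.
Qed.

Lemma contact_separate u v : u != v -> ~~ adj u v ->
  exists i, Rmin (contact_hi u i) (contact_hi v i) < Rmax (contact_lo u i) (contact_lo v i).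
Proof.
move=> uv nadj_uv; exists (lift ord0 (enum_rank u)).
by rewrite /contact_lo /contact_hi liftK enum_rankK; apply: side_separate.
Qed.

Lemma contact_intervals_in_CBU : in_CBU adj.
Proof.
exists #|V|.+1; apply: (in_dCBU_of_boxes contact_lt) => u v /eqP uv.
  exact: contact_touch.
exact: contact_separate.
Qed.

End ContactBoxes.

(* Colour i of C5 = K_{5/2} gets the interval [C5_lo i, C5_hi i]: along the
   5-cycle 0, 2, 4, 1, 3 consecutive intervals touch. *)
Definition C5_lo (i : nat) : R := match i with 0 => 0 | 1 => 3 | 2 | 3 => 1 | _ => 2 end.
Definition C5_hi (i : nat) : R := match i with 0 => 1 | 1 => 5 | 2 => 2 | _ => 3 end.

Lemma C5_lt i : C5_lo i < C5_hi i.
Proof. by case: i => [|[|[|[|i]]]] /=; lra. Qed.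

Lemma C5_touch (i j : 'I_5) : (2 <= (i - j) + (j - i) <= 5 - 2)%N ->
  C5_hi i = C5_lo j \/ C5_hi j = C5_lo i.
Proof.
case: i j => [[|[|[|[|[|i]]]]] //= _] [[|[|[|[|[|j]]]]] //= _] _; by [left | right].
Qed.

Lemma kd_coloring_5_2_in_CBU (V : finType) (adj : rel V) (c : V -> 'I_5) :
  (forall u v, adj u v = adj v u) -> kd_coloring adj 2 c -> in_CBU adj.
Proof.
move=> adjC c_col; apply: (contact_intervals_in_CBU (a := C5_lo \o c) (b := C5_hi \o c) adjC).
  by move=> v; apply: C5_lt.
by move=> u v /c_col; apply: C5_touch.
Qed.

Theorem mainTheorem15 (V : finType) (adj : rel V) :
  simple_graph adj ->
  circ_chrom_le adj (5 / 2)%R ->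
  in_CBU adj.
Proof.
move=> [adjC _] /(circ_chrom_le_5_2_colorable adjC) [c c_col].
exact: kd_coloring_5_2_in_CBU adjC c_col.
Qed.
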